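(* Let $\mathfrak{X}$ be a connected complex analytic manifold with base point $z^*$, universal covering $\widetilde{\mathfrak{X}}$, and $\pi=\pi_1(\mathfrak{X},z^* )$. Then the spaces $\widehat{\mathcal{F}}^q_k$ of the $\hat\pi$-unipotent filtration are invariant under all monodromy operators $M_\gamma$, $\gamma\in\pi$.
   Context: $\pi$ acts on $\widetilde{\mathfrak{X}}$ by deck transformations $T_\gamma$; for a holomorphic $q$-form $\theta$ on $\widetilde{\mathfrak{X}}$, $M_\gamma\theta=T_\gamma^*\theta$ and $\mathrm{Var}_\gamma\theta=M_\gamma\theta-\theta$. $\hat\pi\subset\pi$ is the kernel of the natural epimorphism $\pi\to H_1(\mathfrak{X};\mathbb{Z}_2)$. The $\hat\pi$-unipotent filtration on the space $\mathcal{A}^q(\widetilde{\mathfrak{X}})$ of holomorphic $q$-forms on $\widetilde{\mathfrak{X}}$ is $\widehat{\mathcal{F}}^q_{-1}=\{0\}$ and $\widehat{\mathcal{F}}^q_k=\{\theta:\mathrm{Var}_\gamma\theta\in\widehat{\mathcal{F}}^q_{k-1}\text{ for all }\gamma\in\hat\pi\}$ for $k\ge0$. *)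

From HB Require Import structures.
From mathcomp Require Import all_boot all_order all_algebra.
Set Implicit Arguments. Unset Strict Implicit. Unset Printing Implicit Defensive.
Import GRing.Theory.
Local Open Scope ring_scope.

Record group_str (G : Type) := GroupStr {
  gmul : G -> G -> G;
  ginv : G -> G;
  gone : G;
  gmulA : forall x y z, gmul x (gmul y z) = gmul (gmul x y) z;
  gmul1 : forall x, gmul gone x = x;
  gmulV : forall x, gmul (ginv x) x = gone;
}.

(* pi-hat := kernel of pi -> pi^ab (x) Z_2 = H_1(X; Z_2), i.e. the subgroup
   generated by the squares of pi (it contains the commutators). *)
Inductive hat_sub (G : Type) (g : group_str G) : G -> Prop :=
  | hat_one : hat_sub g (gone g)
  | hat_sq : forall x, hat_sub g (gmul g x x)
  | hat_mul : forall x y, hat_sub g x -> hat_sub g y -> hat_sub g (gmul g x y).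

(* A right action of the group on V by linear maps: M_gamma = T_gamma^*,
   so M_(gamma delta) = M_delta o M_gamma and M_1 = id. *)
Definition monodromy_action (K : fieldType) (V : lmodType K) (G : Type)
  (g : group_str G) (M : G -> {linear V -> V}) : Prop :=
  (forall v, M (gone g) v = v) /\
  (forall x y v, M (gmul g x y) v = M y (M x v)).

Definition Var (K : fieldType) (V : lmodType K) (G : Type)
  (M : G -> {linear V -> V}) (x : G) (v : V) : V := M x v - v.

(* unip_filt k = \hat F_k ; \hat F_{-1} = {0}. *)
Fixpoint unip_filt (K : fieldType) (V : lmodType K) (G : Type)
  (g : group_str G) (M : G -> {linear V -> V}) (k : nat) : V -> Prop :=
  match k with
  | 0 => fun v => forall x, hat_sub g x -> Var M x v = 0
  | k'.+1 => fun v => forall x, hat_sub g x -> unip_filt g M k' (Var M x v)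
  end.

(** The group pi-hat is normal in pi, and M_c intertwines variations:
    Var_x (M_c v) = M_c (Var_(c x c^-1) v).  Hence M_c maps the defining
    condition of each filtration step onto the same condition for the
    conjugated variations, and invariance follows by induction on k. *)

From mathcomp Require Import all_boot all_order all_algebra.
Import GRing.Theory.
Local Open Scope ring_scope.

Section GroupFacts.
Variables (G : Type) (g : group_str G).
Local Notation "x * y" := (gmul g x y).
Local Notation "x ^-1" := (ginv g x).
Local Notation "1" := (gone g).

(* The axioms only give a left identity and left inverses. *)
Lemma gmulVr x : x * x^-1 = 1.
Proof.
have idem : (x * x^-1) * (x * x^-1) = x * x^-1.
  by rewrite -gmulA (gmulA _ x^-1) gmulV gmul1.
rewrite -[x * x^-1](gmul1 g) -{1}(gmulV g (x * x^-1)).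
by rewrite -gmulA idem gmulV.
Qed.

Lemma gmul1r x : x * 1 = x.
Proof. by rewrite -(gmulV g x) gmulA gmulVr gmul1. Qed.

Lemma gmulVKr a c : (a * c^-1) * c = a.
Proof. by rewrite -gmulA gmulV gmul1r. Qed.

Lemma hat_subJ c x : hat_sub g x -> hat_sub g ((c * x) * c^-1).
Proof.
elim=> [|y|y z _ Hy _ Hz].
- by rewrite gmul1r gmulVr; constructor.
- have -> : (c * (y * y)) * c^-1 = ((c * y) * c^-1) * ((c * y) * c^-1).
    by rewrite !gmulA gmulVKr.
  by constructor.
- have -> : (c * (y * z)) * c^-1 = ((c * y) * c^-1) * ((c * z) * c^-1).
    by rewrite !gmulA gmulVKr.
  by constructor.
Qed.

End GroupFacts.

Section Monodromy.
Variables (K : fieldType) (V : lmodType K) (G : Type) (g : group_str G).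
Variable M : G -> {linear V -> V}.
Hypothesis M_mul : forall x y v, M (gmul g x y) v = M y (M x v).

Lemma Var_monodromy c x v :
  Var M x (M c v) = M c (Var M (gmul g (gmul g c x) (ginv g c)) v).
Proof. by rewrite /Var linearB /= -!M_mul gmulVKr M_mul. Qed.

Lemma unip_filt_monodromy k c v :
  unip_filt g M k v -> unip_filt g M k (M c v).
Proof.
elim: k c v => [|k IH] c v /= Hv x Hx; rewrite Var_monodromy.
- by rewrite Hv ?linear0 //; apply: hat_subJ.
- by apply: IH; apply: Hv; apply: hat_subJ.
Qed.

End Monodromy.

Theorem lemma2 (K : fieldType) (V : lmodType K) (G : Type) (g : group_str G)
  (M : G -> {linear V -> V}) (HM : monodromy_action g M) :
  forall (k : nat) (gam : G) (v : V),
    unip_filt g M k v -> unip_filt g M k (M gam v).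
Proof.
case: HM => _ M_mul k gam v.
exact: unip_filt_monodromy.
Qed.
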